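(* Let $G$ be a network with three sources and three terminals containing no vertex of type $(3,3)$, $(2,3)$ or $(3,2)$, and let $\mathbb{F}$ be a finite field. For each color $c=(s_a,s_b,t_c,t_d)$ occurring among the $(2,2)$ vertices of $G$, let $f_c:\mathbb{F}^2\to\mathbb{F}$ be an arbitrary function. Then there exists a single network code on $G$ such that, for every such color $c$, every vertex of type $(2,2)$ and color $c$ can compute $f_c(X_a,X_b)$ from the symbols on its incoming edges.
   Context: A network is a finite directed acyclic graph $G=(V,E)$ (parallel edges allowed), every edge of unit capacity carrying one symbol of a finite field $\mathbb{F}$, with three sources $s_1,s_2,s_3$ (no incoming edges; $s_i$ holds $X_i\in\mathbb{F}$) and three terminals $t_1,t_2,t_3$ (no outgoing edges). A network code assigns to each edge leaving a source a function of its symbol, and to each edge leaving a non-source vertex $v$ a function of the symbols on edges entering $v$. For $v\in V$, $c_s(v)$ is the number of sources with a directed path to $v$ and $c_t(v)$ the number of terminals reachable from $v$ (a vertex reaches itself); $(c_s(v),c_t(v))$ is the type of $v$. For $v$ of type $(2,2)$, its color $\mathrm{col}(v)=(s_a,s_b,t_c,t_d)$ lists the two sources reaching $v$ and the two terminals reachable from $v$. *)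

From HB Require Import structures.
From mathcomp Require Import all_boot all_order all_algebra all_field.
Set Implicit Arguments. Unset Strict Implicit. Unset Printing Implicit Defensive.

(* A network: vertex type V, edge type E (parallel edges allowed since edges
   are a separate finite type), tail/head maps [src]/[tgt]. *)
Section Network.
Variables (V E : finType) (src tgt : E -> V).

Definition adj : rel V := fun u w => [exists e : E, (src e == u) && (tgt e == w)].

Definition reaches (u w : V) : bool := connect adj u w.

(* acyclicity: no edge closes a directed cycle (also forbids loops) *)
Definition acyclic : Prop := forall e : E, ~~ reaches (tgt e) (src e).

Variables (s t : 'I_3 -> V).

Definition srcs_of (v : V) : {set 'I_3} := [set i | reaches (s i) v].
Definition tgts_of (v : V) : {set 'I_3} := [set j | reaches v (t j)].

Definition c_s (v : V) : nat := #|srcs_of v|.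
Definition c_t (v : V) : nat := #|tgts_of v|.

Definition network3 : Prop :=
  [/\ acyclic, injective s, injective t,
      (forall (e : E) (i : 'I_3), tgt e != s i) &
      (forall (e : E) (j : 'I_3), src e != t j)].

Definition is_source (v : V) : bool := [exists i : 'I_3, v == s i].

Definition in_edges (v : V) := {e : E | tgt e == v}.

Variable F : finFieldType.

(* A network code, given by the global symbol g e X carried by each edge as a
   function of the source messages X; it is a network code iff every edge
   symbol is a local function: of X_i for edges leaving source s_i, and of
   the symbols on the incoming edges of the tail otherwise. *)
Definition network_code (g : E -> ('I_3 -> F) -> F) : Prop :=
  forall e : E,
    (forall i : 'I_3, src e = s i ->
       exists h : F -> F, forall X, g e X = h (X i)) /\
    (~~ is_source (src e) ->
       exists h : {ffun in_edges (src e) -> F} -> F,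
         forall X, g e X = h [ffun e' : in_edges (src e) => g (val e') X]).

Definition computes (g : E -> ('I_3 -> F) -> F) (v : V)
    (phi : ('I_3 -> F) -> F) : Prop :=
  exists h : {ffun in_edges v -> F} -> F,
    forall X, h [ffun e' : in_edges v => g (val e') X] = phi X.

End Network.

From HB Require Import structures.
From mathcomp Require Import all_boot all_order all_algebra all_field.
Set Implicit Arguments. Unset Strict Implicit. Unset Printing Implicit Defensive.

(* Every vertex v sends one and the same symbol on all its out-edges, which
   depends only on the source set A and the terminal set B of v: X_i when
   A = {i}, f_(A,B)(X_a, X_b) when A = {a, b} and |B| = 2, and 0 otherwise.
   This code is local.  A vertex reached by the single source i has an
   in-neighbour reached by i, hence reached by i only.  At a vertex v of type
   (2,2) either some in-neighbour u has the same source set; then T(u)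
   contains T(v) and u is not of type (2,3), so u has the colour of v and
   already carries the required symbol; or no in-neighbour does, and then
   each of the two sources reaches v through an in-neighbour reached by that
   source alone, which carries X_a, resp. X_b. *)

Lemma sorted_enum_ord n (A : {pred 'I_n}) : sorted (relpre val ltn) (enum A).
Proof.
rewrite -sorted_map; apply: (subseq_sorted ltn_trans _ (iota_ltn_sorted 0 n)).
rewrite -val_enum_ord; apply: map_subseq.
by rewrite enumT /enum_mem; apply: filter_subseq.
Qed.

Lemma enum_set2_ord n (a b : 'I_n) : a < b -> enum [set a; b] = [:: a; b].
Proof.
move=> ltab; apply: (irr_sorted_eq _ _ (sorted_enum_ord _)) => /=.
- by move=> j i k; apply: ltn_trans.
- by move=> i; rewrite /= ltnn.
- by rewrite ltab.
- by move=> i; rewrite mem_enum !inE.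
Qed.

Lemma set_enum1 (T : finType) (A : {set T}) i : enum A = [:: i] -> A = [set i].
Proof. by move=> eA; apply/setP => x; rewrite -mem_enum eA !inE. Qed.

Lemma set_enum2 (T : finType) (A : {set T}) i j :
  enum A = [:: i; j] -> A = [set i; j].
Proof. by move=> eA; apply/setP => x; rewrite -mem_enum eA !inE. Qed.

Lemma proper_card2_set1 (T : finType) (A B : {set T}) x :
  A \proper B -> #|B| = 2 -> x \in A -> A = [set x].
Proof.
move=> /proper_card ltAB cB Ax; apply/esym/eqP.
by rewrite eqEcard sub1set Ax cards1 -ltnS -cB.
Qed.

Section ColourSymbol.
Variables (F : finFieldType) (f : {set 'I_3} -> {set 'I_3} -> F -> F -> F).

Definition colour_symbol (A B : {set 'I_3}) (X : 'I_3 -> F) : F :=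
  match enum A with
  | [:: i] => X i
  | [:: a; b] => if #|B| == 2 then f A B (X a) (X b) else 0%R
  | _ => 0%R
  end.

Lemma colour_symbol_set1 i (B : {set 'I_3}) (X : 'I_3 -> F) :
  colour_symbol [set i] B X = X i.
Proof. by rewrite /colour_symbol enum_set1. Qed.

Lemma colour_symbol_set2 (a b : 'I_3) (B : {set 'I_3}) (X : 'I_3 -> F) :
  a < b -> #|B| = 2 -> colour_symbol [set a; b] B X = f [set a; b] B (X a) (X b).
Proof. by move=> ltab cB; rewrite /colour_symbol enum_set2_ord // cB eqxx. Qed.

End ColourSymbol.

Section LocalComputation.
Variables (V E : finType) (tgt : E -> V) (F : finFieldType).
Variables (g : E -> ('I_3 -> F) -> F) (v : V).

Lemma computes_const (c : F) : computes tgt g v (fun=> c).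
Proof. by exists (fun=> c). Qed.

Lemma computes_in_edge2 (e1 e2 : E) (op : F -> F -> F) phi :
  tgt e1 = v -> tgt e2 = v -> (forall X, phi X = op (g e1 X) (g e2 X)) ->
  computes tgt g v phi.
Proof.
move=> /eqP e1v /eqP e2v phiE.
exists (fun y => op (y (exist _ e1 e1v)) (y (exist _ e2 e2v))) => X.
by rewrite !ffunE phiE.
Qed.

Lemma computes_in_edge (e : E) phi :
  tgt e = v -> (forall X, phi X = g e X) -> computes tgt g v phi.
Proof. by move=> ev; apply: (computes_in_edge2 (op := fun x _ => x) ev ev). Qed.

End LocalComputation.

Section Network.
Variables (V E : finType) (src tgt : E -> V) (s t : 'I_3 -> V).
Variables (F : finFieldType) (f : {set 'I_3} -> {set 'I_3} -> F -> F -> F).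

Local Notation reaches := (reaches src tgt).
Local Notation S := (srcs_of src tgt s).
Local Notation T := (tgts_of src tgt t).

Lemma reaches_edge e : reaches (src e) (tgt e).
Proof. by apply: connect1; apply/existsP; exists e; rewrite !eqxx. Qed.

Lemma reaches_in_edge u w : reaches u w -> u != w ->
  exists e, tgt e = w /\ reaches u (src e).
Proof.
case/connectP => p; elim/last_ind: p => [_ -> |p x _]; first by rewrite eqxx.
rewrite rcons_path last_rcons => /andP[up /existsP[e /andP[/eqP ex /eqP ew]]] ->.
by exists e; split=> //; apply/connectP; exists p; rewrite // ex.
Qed.

Lemma srcs_of_edge e : S (src e) \subset S (tgt e).
Proof.
by apply/subsetP => i; rewrite !inE => /connect_trans; apply; apply: reaches_edge.
Qed.

Lemma tgts_of_edge e : T (tgt e) \subset T (src e).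
Proof. by apply/subsetP => j; rewrite !inE; apply: connect_trans (reaches_edge e). Qed.

Lemma in_edge_of_srcs v i : ~~ is_source s v -> i \in S v ->
  exists e, tgt e = v /\ i \in S (src e).
Proof.
move=> vNsrc; rewrite inE => siv.
have siNv : s i != v by apply: contraNneq vNsrc => <-; apply/existsP; exists i.
by have [e [ev sie]] := reaches_in_edge siv siNv; exists e; rewrite inE.
Qed.

Hypothesis s_inj : injective s.
Hypothesis no_edge_into_source : forall e i, tgt e != s i.

Lemma srcs_of_source i : S (s i) = [set i].
Proof.
apply/setP => j; rewrite !inE; apply/idP/eqP => [sj_si|->]; last exact: connect0.
apply: s_inj; apply: contraTeq sj_si => sjNsi; apply/negP => sj_si.
have [e [ei _]] := reaches_in_edge sj_si sjNsi.
by have := no_edge_into_source e i; rewrite ei eqxx.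
Qed.

Lemma not_source_srcs2 v : #|S v| = 2 -> ~~ is_source s v.
Proof.
by move=> cS; apply/existsP => -[i /eqP vi]; rewrite vi srcs_of_source cards1 in cS.
Qed.

Hypothesis no_type23 : forall v, ~ (c_s src tgt s v = 2 /\ c_t src tgt t v = 3).

Lemma tgts_of_same_srcs e : S (src e) = S (tgt e) -> #|S (tgt e)| = 2 ->
  #|T (tgt e)| = 2 -> T (src e) = T (tgt e).
Proof.
move=> sameS cS cT; have sub := tgts_of_edge e.
have le3 : #|T (src e)| <= 3 by have := max_card (mem (T (src e))); rewrite card_ord.
have ne3 : #|T (src e)| != 3.
  apply/eqP => c3; apply: (no_type23 (v := src e)).
  by rewrite /c_s /c_t sameS.
apply/esym/eqP; rewrite eqEcard sub cT.
by move: le3 ne3; rewrite leq_eqVlt => /orP[/eqP-> //|]; rewrite ltnS.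
Qed.

Definition node_symbol (v : V) : ('I_3 -> F) -> F := colour_symbol f (S v) (T v).

Definition node_code (e : E) : ('I_3 -> F) -> F := node_symbol (src e).

Lemma computes_single_source v i : ~~ is_source s v -> S v = [set i] ->
  computes tgt node_code v (node_symbol v).
Proof.
move=> vNsrc Sv; have /(in_edge_of_srcs vNsrc)[e [ev ie]] : i \in S v.
  by rewrite Sv set11.
have Se : S (src e) = [set i].
  by apply/eqP; rewrite eqEsubset -{1}Sv -ev srcs_of_edge sub1set ie.
apply: (computes_in_edge ev) => X.
by rewrite /node_code /node_symbol Sv Se !colour_symbol_set1.
Qed.

Lemma computes_pair_sources v i j : ~~ is_source s v -> enum (S v) = [:: i; j] ->
  #|T v| = 2 -> computes tgt node_code v (node_symbol v).
Proof.
move=> vNsrc eS cT; have cS : #|S v| = 2 by rewrite cardE eS.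
have symE X : node_symbol v X = f (S v) (T v) (X i) (X j).
  by rewrite /node_symbol /colour_symbol eS cT eqxx.
have [/existsP[[e /eqP ev] /= /eqP sameS]|/existsPn distinctS] :=
  boolP [exists e : in_edges tgt v, S (src (val e)) == S v].
  subst v; apply: (computes_in_edge (erefl (tgt e))) => X.
  by rewrite /node_code /node_symbol (tgts_of_same_srcs sameS cS cT) sameS.
have single k : k \in S v -> exists2 e, tgt e = v & S (src e) = [set k].
  move=> kS; have [e [ev ke]] := in_edge_of_srcs vNsrc kS; exists e => //.
  apply: (proper_card2_set1 _ cS ke); rewrite properEneq -ev srcs_of_edge ev andbT.
  by have := distinctS (exist _ e (introT eqP ev)).
have [e1 e1v Se1] : exists2 e, tgt e = v & S (src e) = [set i].
  by apply: single; rewrite (set_enum2 eS) !inE eqxx.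
have [e2 e2v Se2] : exists2 e, tgt e = v & S (src e) = [set j].
  by apply: single; rewrite (set_enum2 eS) !inE eqxx orbT.
apply: (computes_in_edge2 (op := f (S v) (T v)) e1v e2v) => X.
by rewrite symE /node_code /node_symbol Se1 Se2 !colour_symbol_set1.
Qed.

Lemma computes_node_symbol v : ~~ is_source s v ->
  computes tgt node_code v (node_symbol v).
Proof.
move=> vNsrc; case eS: (enum (S v)) => [|i [|j [|k l]]].
- by rewrite /node_symbol /colour_symbol eS; apply: computes_const.
- exact: computes_single_source vNsrc (set_enum1 eS).
- have [cT|cTN] := eqVneq #|T v| 2; first exact: computes_pair_sources eS cT.
  by rewrite /node_symbol /colour_symbol eS (negbTE cTN); apply: computes_const.
- by rewrite /node_symbol /colour_symbol eS; apply: computes_const.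
Qed.

Lemma node_code_network_code : network_code src tgt s node_code.
Proof.
move=> e; split=> [i srcE|eNsrc].
  exists id => X.
  by rewrite /node_code /node_symbol srcE srcs_of_source colour_symbol_set1.
by have [h hE] := computes_node_symbol eNsrc; exists h => X; rewrite hE.
Qed.

End Network.

Theorem mainTheorem11 (V E : finType) (src tgt : E -> V) (s t : 'I_3 -> V)
  (F : finFieldType)
  (Hnet : network3 src tgt s t)
  (Htypes : forall v : V,
     ~ (c_s src tgt s v = 3 /\ c_t src tgt t v = 3) /\
     ~ (c_s src tgt s v = 2 /\ c_t src tgt t v = 3) /\
     ~ (c_s src tgt s v = 3 /\ c_t src tgt t v = 2))
  (f : {set 'I_3} -> {set 'I_3} -> F -> F -> F) :
  exists g : E -> ('I_3 -> F) -> F,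
    network_code src tgt s g /\
    forall (v : V) (a b : 'I_3),
      c_s src tgt s v = 2 -> c_t src tgt t v = 2 ->
      (a < b)%N -> srcs_of src tgt s v = [set a; b] ->
      computes tgt g v
        (fun X => f (srcs_of src tgt s v) (tgts_of src tgt t v) (X a) (X b)).
Proof.
have [_ s_inj _ no_edge_into_source _] := Hnet.
have no_type23 v := (Htypes v).2.1.
exists (node_code src tgt s t f); split.
  exact: node_code_network_code s_inj no_edge_into_source no_type23.
move=> v a b cS cT ltab Sv.
have vNsrc := not_source_srcs2 s_inj no_edge_into_source cS.
have [h hE] := computes_node_symbol f no_type23 vNsrc.
by exists h => X; rewrite hE /node_symbol Sv colour_symbol_set2.
Qed.
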